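(* Let $G=(V,w,m)$ be a locally finite measured weighted graph (as defined in the context). Suppose that (i) $\operatorname{Deg}_{\max} := \sup_{x\in V}\sum_{y\in V} q(x,y) < \infty$, (ii) $q_{\min} := \inf_{x\sim y} q(x,y) > 0$, (iii) $\kappa(x,y)\ge 0$ for all $x\neq y\in V$. Then every bounded harmonic function $f:V\to\mathbb{R}$ (i.e. bounded $f$ with $\Delta f=0$) is constant.
   Context: A measured weighted graph $G=(V,w,m)$ consists of a countable set $V$, a symmetric function $w:V\times V\to[0,\infty)$ vanishing on the diagonal, and $m:V\to(0,\infty)$. Write $x\sim y$ iff $w(x,y)>0$. Local finiteness means $|\{y: w(x,y)>0\}|<\infty$ for every $x$. Set $q(x,y):=w(x,y)/m(x)$ and $\Delta f(x):=\sum_y q(x,y)(f(y)-f(x))$ for $f\in\mathbb{R}^V$. The combinatorial distance is $d(x,y):=\inf\{n: x=x_0\sim x_1\sim\cdots\sim x_n=y\}$. For $x\neq y$ put $\nabla_{xy}f:=\frac{f(x)-f(y)}{d(x,y)}$ and $\|\nabla f\|_\infty:=\sup_{x\sim y}\nabla_{xy}f$. The (Lin–Lu–Yau type, generalized) Ollivier curvature of $x\neq y$ is $$\kappa(x,y):=\inf\{\nabla_{xy}\Delta f:\ f\in\mathbb{R}^V,\ \nabla_{yx}f=1,\ \|\nabla f\|_\infty=1\}.$$ *)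

From mathcomp Require Import all_boot all_order all_algebra.
From mathcomp Require Import all_classical all_reals all_analysis.
Set Implicit Arguments. Unset Strict Implicit. Unset Printing Implicit Defensive.
Import Order.TTheory GRing.Theory Num.Theory.
Local Open Scope classical_set_scope.
Local Open Scope ring_scope.

Section Graph.
Variables (R : realType) (V : countType) (w : V -> V -> R) (m : V -> R).

Definition is_mwgraph : Prop :=
  [/\ forall x y, 0 <= w x y, forall x y, w x y = w y x,
      forall x, w x x = 0 & forall x, 0 < m x].

Definition adj (x y : V) : Prop := 0 < w x y.

Definition locally_finite : Prop := forall x, finite_set [set y | adj x y].

Definition q (x y : V) : R := w x y / m x.

(* Laplacian: finitely supported sum over V (well defined under local finiteness) *)
Definition Lap (f : V -> R) (x : V) : R := \sum_(y \in [set: V]) q x y * (f y - f x).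

Definition Deg (x : V) : R := \sum_(y \in [set: V]) q x y.

Definition path_len (x y : V) (n : nat) : Prop :=
  exists p : nat -> V, [/\ p 0%N = x, p n = y &
     forall i, (i < n)%N -> adj (p i) (p i.+1)].

Definition connected_graph : Prop := forall x y, exists n, path_len x y n.

Definition edist (x y : V) : \bar R :=
  ereal_inf [set (n%:R)%:E | n in [set n | path_len x y n]].

Definition dist (x y : V) : R := fine (edist x y).

Definition nabla (x y : V) (f : V -> R) : R := (f x - f y) / dist x y.

Definition nabla_sup (f : V -> R) : \bar R :=
  ereal_sup [set (nabla xy.1 xy.2 f)%:E | xy in [set xy : V * V | adj xy.1 xy.2]].

(* generalized Lin–Lu–Yau / Ollivier curvature *)
Definition kappa (x y : V) : \bar R :=
  ereal_inf [set (nabla x y (Lap f))%:E |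
             f in [set f : V -> R | nabla y x f = 1 /\ nabla_sup f = 1%E]].

Definition Deg_max : \bar R := ereal_sup [set (Deg x)%:E | x in [set: V]].

Definition q_min : \bar R :=
  ereal_inf [set (q xy.1 xy.2)%:E | xy in [set xy : V * V | adj xy.1 xy.2]].

End Graph.

From Pilot Require Import Defs.
From mathcomp Require Import all_boot all_order all_algebra.
From mathcomp Require Import all_classical all_reals all_analysis.
From mathcomp Require Import finmap ring lra.
Import Order.TTheory GRing.Theory Num.Theory.
Local Open Scope classical_set_scope.
Local Open Scope ring_scope.

(* Suppose [f] is bounded, harmonic and not constant, and rescale it so that
   the supremum of its increments [f a - f b] along edges is 1.  Harmonicity at
   the top [a] of an edge of slope [1 - eps] forces a neighbour of [a] at least
   [s = q_min / (4 Deg_max)] higher.  Nonnegative curvature, tested on the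
   1-Lipschitz function [min (f + bump) (f a - 1 + min (d(b, .), 2))], then
   shows that some edge above that level still has slope [1 - C eps] with
   [C = 3 Deg_max / q_min].  Starting from an edge of slope [1 - s / C^n] and
   iterating [n] times, [f] climbs by [n s], which contradicts boundedness. *)

Section Graph.
Context {R : realType} {V : countType} {w : V -> V -> R} {m : V -> R}.
Hypotheses (Hg : is_mwgraph w m) (Hlf : locally_finite w).

Local Notation adj := (Defs.adj w).
Local Notation q := (Defs.q w m).
Local Notation Lap := (Defs.Lap w m).
Local Notation Deg := (Defs.Deg w m).

Definition nb (x : V) : seq V := fset_set [set y | adj x y].

Lemma mem_nb x y : (y \in nb x) = (0 < w x y).
Proof.
rewrite /nb in_fset_set; last exact: Hlf.
by apply/idP/idP => [/set_mem|h]; [|apply/mem_set].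
Qed.

Lemma nb_uniq x : uniq (nb x).
Proof. exact: fset_uniq. Qed.

Lemma adj_sym x y : adj x y -> adj y x.
Proof. by case: Hg => _ Hs _ _; rewrite /Defs.adj Hs. Qed.
Arguments adj_sym [x y].

Lemma adj_neq x y : adj x y -> x <> y.
Proof. by case: Hg => _ _ H0 _ + E; rewrite /Defs.adj E H0 ltxx. Qed.
Arguments adj_neq [x y].

Lemma q_ge0 x y : 0 <= q x y.
Proof. by case: Hg => H0 _ _ Hm; rewrite /Defs.q divr_ge0 // ltW. Qed.

Lemma q_nadj x y : ~ adj x y -> q x y = 0.
Proof.
case: Hg => H0 _ _ _ hxy; rewrite /Defs.q.
suff -> : w x y = 0 by rewrite mul0r.
by apply/eqP; rewrite eq_le H0 andbT leNgt; apply/negP.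
Qed.

Lemma fsbig_nb x (F : V -> R) : (forall y, ~ adj x y -> F y = 0) ->
  \sum_(y \in [set: V]) F y = \sum_(y <- nb x) F y.
Proof.
move=> HF; rewrite -(@fsbig_widen _ _ _ _ [set y | adj x y]) //.
  by rewrite fsbig_finite //; exact: Hlf.
by move=> y [_ /= /HF].
Qed.

Lemma LapE f x : Lap f x = \sum_(y <- nb x) q x y * (f y - f x).
Proof.
by rewrite /Defs.Lap (@fsbig_nb x) // => y /q_nadj ->; rewrite mul0r.
Qed.

Lemma DegE x : Deg x = \sum_(y <- nb x) q x y.
Proof. by rewrite /Defs.Deg (@fsbig_nb x) // => y /q_nadj. Qed.

Lemma ler_sum_nb x (A B : V -> R) : (forall y, adj x y -> A y <= B y) ->
  \sum_(y <- nb x) A y <= \sum_(y <- nb x) B y.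
Proof.
move=> H; rewrite big_seq [leRHS]big_seq; apply: ler_sum => y.
by rewrite mem_nb => /H.
Qed.

Lemma Deg_ge0 x : 0 <= Deg x.
Proof. by rewrite DegE; apply: sumr_ge0 => y _; exact: q_ge0. Qed.

Lemma q_le_Deg x y : adj x y -> q x y <= Deg x.
Proof.
move=> hxy; rewrite DegE (bigD1_seq y) ?mem_nb ?nb_uniq //= lerDl.
by apply: sumr_ge0 => z _; exact: q_ge0.
Qed.
Arguments q_le_Deg [x y].

Lemma Lap_scale k f x : Lap (fun z => k * f z) x = k * Lap f x.
Proof.
by rewrite !LapE mulr_sumr; apply: eq_bigr => y _; rewrite -mulrBr mulrCA.
Qed.

Lemma Lap_le_shift x g h c :
  (forall y, adj x y -> g y - g x <= h y - h x + c) ->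
  Lap g x <= Lap h x + c * Deg x.
Proof.
move=> H; rewrite !LapE DegE mulr_sumr -big_split /=.
apply: ler_sum_nb => y hxy; rewrite [c * _]mulrC -mulrDr.
by apply: ler_wpM2l; [exact: q_ge0 | exact: H].
Qed.

Lemma dist_adj x y : adj x y -> Defs.dist w x y = 1.
Proof.
move=> hxy; suff E : Defs.edist w x y = 1%:E by rewrite /Defs.dist E.
apply/eqP; rewrite eq_le; apply/andP; split.
  apply: ereal_inf_lbound; exists 1%N => //.
  exists (fun i => if i == 0%N then x else y); split => //.
  by move=> i; rewrite ltnS leqn0 => /eqP ->.
apply: le_ereal_inf_tmp => _ [n [p [p0 pn _]] <-].
rewrite lee_fin ler1n lt0n; apply/negP => /eqP n0.
by apply: (adj_neq hxy); rewrite -p0 -pn n0.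
Qed.

Lemma nabla_adj x y f : adj x y -> nabla w x y f = f x - f y.
Proof. by move=> hxy; rewrite /nabla dist_adj // divr1. Qed.

Definition lip1 (g : V -> R) := forall a b, adj a b -> g a - g b <= 1.

Lemma lip1_min g h : lip1 g -> lip1 h -> lip1 (fun z => Num.min (g z) (h z)).
Proof.
move=> Hg1 Hh1 a b hab /=; have [hb|hb] := leP (g b) (h b).
  apply: le_trans (Hg1 _ _ hab).
  by rewrite lerD2r ge_min lexx.
apply: le_trans (Hh1 _ _ hab).
by rewrite lerD2r ge_min lexx orbT.
Qed.

Definition trunc_dist (x z : V) : R :=
  if z == x then 0 else if 0 < w x z then 1 else 2.

Lemma lip1_trunc_dist x : lip1 (trunc_dist x).
Proof.
move=> a b hab; rewrite /trunc_dist.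
case: eqP => [_|nax]; first by case: eqP => _; [|case: ifP]; lra.
case: ifP => hxa; first by case: eqP => _; [|case: ifP]; lra.
case: eqP => [E|_]; last by case: ifP; lra.
by move: (adj_sym hab); rewrite E /Defs.adj hxa.
Qed.

Lemma nabla_sup_lip1 g a b : lip1 g -> adj a b -> g a - g b = 1 ->
  nabla_sup w g = 1%E.
Proof.
move=> Hl hab e; apply/eqP; rewrite eq_le; apply/andP; split.
  apply: ge_ereal_sup => _ [[x y] /= hxy <-].
  by rewrite nabla_adj // lee_fin Hl.
by apply: ereal_sup_ubound; exists (a, b) => //=; rewrite nabla_adj ?e.
Qed.

Lemma Deg_max_ub : (Deg_max w m < +oo)%E ->
  exists2 K, 0 < K & forall x, Deg x <= K.
Proof.
have Hub x : ((Deg x)%:E <= Deg_max w m)%E by apply: ereal_sup_ubound; exists x.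
move: Hub; case: (Deg_max w m) => [r| |] // Hub _.
  exists (Num.max r 1); first by rewrite lt_max ltr01 orbT.
  by move=> x; rewrite le_max -lee_fin Hub.
by exists 1 => // x; have := Hub x; rewrite leeNy_eq.
Qed.

Lemma q_min_lb : (0 < q_min w m)%E ->
  exists2 Q, 0 < Q & forall x y, adj x y -> Q <= q x y.
Proof.
have Hlb x y : adj x y -> (q_min w m <= (q x y)%:E)%E.
  by move=> hxy; apply: ereal_inf_lbound; exists (x, y).
move: Hlb; case: (q_min w m) => [r| |] // Hlb.
  by rewrite lte_fin => r0; exists r => // x y /Hlb; rewrite lee_fin.
by exists 1 => // x y /Hlb; rewrite leye_eq.
Qed.

Lemma connected_nonconst_edge {f : V -> R} {x y : V} : connected_graph w ->
  f x != f y -> exists a b, adj a b /\ f b < f a.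
Proof.
move=> Hconn Hne.
suff [a [b [hab]]] : exists a b, adj a b /\ f a != f b.
  rewrite neq_lt => /orP[hlt|hgt]; last by exists a, b.
  by exists b, a; split => //; exact: adj_sym.
have [n [p [p0 pn hp]]] := Hconn x y.
apply: contrapT => Hc.
have Hconst i : (i <= n)%N -> f (p i) = f x.
  elim: i => [|i IH] hi; first by rewrite p0.
  rewrite -(IH (ltnW hi)); apply/eqP/negPn/negP => hneq; apply: Hc.
  by exists (p i), (p i.+1); split; [exact: hp | rewrite eq_sym].
by move: Hne; rewrite -pn Hconst // eqxx.
Qed.

Lemma normalize_gradient {f : V -> R} {M : R} {a0 b0 : V} :
  (forall x, `|f x| <= M) -> adj a0 b0 -> f b0 < f a0 ->
  exists2 L : R, 0 < L & lip1 (fun z => L^-1 * f z) /\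
    (forall eps, 0 < eps ->
       exists a b, adj a b /\ 1 - eps <= L^-1 * f a - L^-1 * f b).
Proof.
move=> HM hab0 hlt.
pose E := [set d | exists a b, adj a b /\ d = f a - f b].
have hsE : has_sup E.
  split; first by exists (f a0 - f b0), a0, b0.
  exists (2 * M) => _ [a [b [_ ->]]].
  by move: (HM a) (HM b); rewrite !ler_norml => /andP[? ?] /andP[? ?]; lra.
have L0 : 0 < sup E.
  have : f a0 - f b0 <= sup E by apply: sup_upper_bound => //; exists a0, b0.
  by move: hlt; lra.
have iL0 : 0 <= (sup E)^-1 by rewrite invr_ge0 ltW.
exists (sup E) => //; split.
  move=> a b hab; rewrite -mulrBr -(mulVf (lt0r_neq0 L0)).
  by apply: ler_wpM2l => //; apply: sup_upper_bound => //; exists a, b.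
move=> eps e0.
have [_ [a [b [hab ->]]] hd] := sup_adherent (mulr_gt0 e0 L0) hsE.
exists a, b; split => //.
rewrite -mulrBr -[1 - eps](mulKf (lt0r_neq0 L0)); apply: ler_wpM2l => //.
by move: hd; lra.
Qed.

Hypothesis Hk : forall x y : V, x <> y -> (0 <= kappa w m x y)%E.

(* [g] is an admissible test function for [kappa b a]. *)
Lemma Lap_le_of_kappa g a b : lip1 g -> adj a b -> g a - g b = 1 ->
  Lap g a <= Lap g b.
Proof.
move=> Hl hab e; have hba := adj_sym hab.
have : (kappa w m b a <= (nabla w b a (Lap g))%:E)%E.
  apply: ereal_inf_lbound; exists g => //; split; first by rewrite nabla_adj.
  exact: nabla_sup_lip1 Hl hab e.
move/(le_trans (Hk _ _ (adj_neq hba))).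
by rewrite lee_fin nabla_adj // subr_ge0.
Qed.
Arguments Lap_le_of_kappa [g a b].

Definition bump (F : V -> R) (c t : R) (z : V) : R :=
  F z + (if c < F z then t else 0).

Lemma bump_low F c t z : F z <= c -> bump F c t z = F z.
Proof. by move=> hz; rewrite /bump ltNge hz addr0. Qed.

Lemma lip1_bump F c t : 0 <= t -> lip1 F ->
  (forall a b, adj a b -> c < F a -> F a - F b <= 1 - t) ->
  lip1 (bump F c t).
Proof.
move=> t0 HF Hsteep a b hab; rewrite /bump; have := HF _ _ hab.
case: ifP => ha; case: ifP => hb; try lra.
by have := Hsteep _ _ hab ha; lra.
Qed.

Lemma Lap_bump_ge F c t y v : 0 <= t -> F y <= c -> adj y v -> c < F v ->
  Lap F y + t * q y v <= Lap (bump F c t) y.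
Proof.
move=> t0 hy hyv hv.
have -> : Lap (bump F c t) y =
    Lap F y + \sum_(u <- nb y) q y u * (if c < F u then t else 0).
  rewrite !LapE -big_split /=; apply: eq_bigr => u _.
  by rewrite (@bump_low F c t y hy) -mulrDr /bump addrAC.
rewrite lerD2l (bigD1_seq v) ?mem_nb ?nb_uniq //= hv mulrC lerDl.
by apply: sumr_ge0 => u _; apply: mulr_ge0; [exact: q_ge0 | case: ifP].
Qed.
Arguments Lap_bump_ge [F c t y v].

Section TestFunction.
Variables (F : V -> R) (a b : V) (c t : R).
Hypotheses (HF : lip1 F) (Hh : forall z, Lap F z = 0) (hab : adj a b).
Hypotheses (hc : F b + 1 <= c) (Hbump : lip1 (bump F c t)).

Lemma bump_near_bot u : u = b \/ adj u b -> bump F c t u = F u.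
Proof.
move=> hu; apply: bump_low; apply: le_trans hc.
case: hu => [->|hub]; first by rewrite lerDl.
by rewrite -lerBlDl; exact: HF.
Qed.

(* Its Laplacian is controlled at [b] because it lies below [F] near [b], and
   at [a] because it lies just below the bump near [a]. *)
Definition probe (z : V) : R :=
  Num.min (bump F c t z) (F a - 1 + trunc_dist b z).

Lemma lip1_probe : lip1 probe.
Proof.
apply: lip1_min => // u v huv.
by have := lip1_trunc_dist b _ _ huv; lra.
Qed.

Lemma probe_top : probe a = F a.
Proof.
rewrite /probe bump_near_bot; last by right.
rewrite /trunc_dist ifF; last by apply/eqP; exact: adj_neq.
by rewrite (adj_sym hab) subrK minxx.
Qed.

Lemma probe_bot : probe b = F a - 1.
Proof.
have Fab := HF _ _ hab.
rewrite /probe bump_near_bot; last by left.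
by rewrite /trunc_dist eqxx addr0 min_r //; lra.
Qed.

Lemma Lap_probe_bot : Lap probe b <= (1 - (F a - F b)) * Deg b.
Proof.
rewrite -[leRHS]add0r -(Hh b); apply: Lap_le_shift => u hbu.
have : probe u <= bump F c t u by rewrite /probe ge_min lexx.
by rewrite bump_near_bot ?probe_bot; [lra | right; exact: adj_sym].
Qed.

Lemma Lap_bump_top :
  Lap (bump F c t) a <= Lap probe a + (1 - (F a - F b)) * Deg a.
Proof.
have Fab := HF _ _ hab.
have bump_a : bump F c t a = F a by rewrite bump_near_bot; last right.
have bump_b : bump F c t b = F b by rewrite bump_near_bot; last left.
apply: Lap_le_shift => u hau; rewrite probe_top bump_a.
suff : bump F c t u - (1 - (F a - F b)) <= probe u by lra.
rewrite /probe le_min; apply/andP; split; first lra.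
rewrite /trunc_dist; case: eqP => [->|_].
  by rewrite bump_b; lra.
case: ifP => hbu; first by have := Hbump _ _ (adj_sym hbu); rewrite bump_b; lra.
by have := Hbump _ _ (adj_sym hau); rewrite bump_a; lra.
Qed.

Lemma Lap_bump_le :
  Lap (bump F c t) a <= (1 - (F a - F b)) * (Deg a + Deg b).
Proof.
have probe_slope : probe a - probe b = 1 by rewrite probe_top probe_bot; ring.
have := Lap_le_of_kappa lip1_probe hab probe_slope.
have := Lap_bump_top; have := Lap_probe_bot; rewrite mulrDr; lra.
Qed.

End TestFunction.
Arguments Lap_bump_le [F a b c t].

Section Harmonic.
Context {Q K : R} {F : V -> R}.
Hypotheses (HQ0 : 0 < Q) (HK0 : 0 < K).
Hypotheses (HQ : forall a b, adj a b -> Q <= q a b) (HK : forall x, Deg x <= K).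
Hypotheses (HF : lip1 F) (Hh : forall z, Lap F z = 0).

Local Notation s := (Q / (4 * K)).
Local Notation C := (3 * K / Q).

Lemma s_gt0 : 0 < s.
Proof. by rewrite divr_gt0 // mulr_gt0. Qed.

Lemma C_gt0 : 0 < C.
Proof. by rewrite divr_gt0 // mulr_gt0. Qed.

(* Harmonicity at [a]: the near-unit drop towards [b] is compensated by a rise
   somewhere else, since [s * Deg a <= Q / 4 < q a b]. *)
Lemma high_neighbor a b : adj a b -> 1 - s <= F a - F b ->
  exists2 v, adj a v & F a + s < F v.
Proof.
move=> hab hd; apply: contrapT => Hlow.
have Hlow' v : adj a v -> F v - F a <= s.
  move=> hav; rewrite leNgt; apply/negP => hv; apply: Hlow; exists v => //.
  by move: hv; lra.
have : q a b + Lap F a <= s * Deg a.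
  rewrite LapE DegE mulr_sumr (bigD1_seq b) ?mem_nb ?nb_uniq //=.
  rewrite [leRHS](bigD1_seq b) ?mem_nb ?nb_uniq //= addrA.
  apply: lerD.
    have hd' : 1 + (F b - F a) <= s by move: hd; lra.
    by have := ler_wpM2l (q_ge0 a b) hd'; lra.
  rewrite big_seq_cond [leRHS]big_seq_cond; apply: ler_sum => u /andP[+ _].
  rewrite mem_nb => hau.
  by rewrite [s * _]mulrC; apply: ler_wpM2l; [exact: q_ge0 | exact: Hlow'].
have sK : s * K = Q / 4 by field; exact: lt0r_neq0.
have := ler_wpM2l (ltW s_gt0) (HK a); have := HQ _ _ hab; have := HQ0.
by rewrite Hh addr0; lra.
Qed.
Arguments high_neighbor [a b].

(* If no edge above level [F a + s] had slope at least [1 - C * eps], lifting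
   [F] by [C * eps] above that level would keep it 1-Lipschitz, and the
   curvature comparison for the edge [(a, b)] would give
   [3 * K * eps <= Lap bump a <= 2 * K * eps]. *)
Lemma steep_step a b eps : adj a b -> 0 < eps <= s -> 1 - eps <= F a - F b ->
  exists a' b', [/\ adj a' b', F a + s < F a' & 1 - C * eps <= F a' - F b'].
Proof.
move=> hab /andP[e0 es] hd; apply: contrapT => Hflat.
have t0 : 0 <= C * eps := mulr_ge0 (ltW C_gt0) (ltW e0).
have Hbump : lip1 (bump F (F a + s) (C * eps)).
  apply: lip1_bump => // a' b' ha'b' ha'; rewrite leNgt; apply/negP => hd'.
  by apply: Hflat; exists a', b'; split => //; exact: ltW.
have hc : F b + 1 <= F a + s by move: hd es; lra.
have [v hav hv] := high_neighbor hab ltac:(move: hd es; lra).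
have Fas : F a <= F a + s by rewrite lerDl ltW // s_gt0.
have := Lap_bump_ge t0 Fas hav hv.
have := Lap_bump_le HF Hh hab hc Hbump.
have CQ : C * eps * Q = 3 * K * eps.
  by rewrite mulrAC; field; exact: lt0r_neq0.
have := ler_wpM2l t0 (HQ _ _ hav).
have d0 : 0 <= 1 - (F a - F b) by rewrite subr_ge0; exact: HF.
have deps : 1 - (F a - F b) <= eps by move: hd; lra.
have := ler_pM d0 (addr_ge0 (Deg_ge0 a) (Deg_ge0 b)) deps (lerD (HK a) (HK b)).
have := mulr_gt0 HK0 e0.
by rewrite Hh add0r; lra.
Qed.
Arguments steep_step [a b eps].

Lemma climb k a b : adj a b -> 1 - s / C ^+ k <= F a - F b ->
  exists a', F a + k%:R * s <= F a'.
Proof.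
elim: k a b => [|k IH] a b hab hd; first by exists a; rewrite mul0r addr0.
have C1 : 1 <= C.
  have := le_trans (HQ _ _ hab) (le_trans (q_le_Deg hab) (HK a)).
  by rewrite ler_pdivlMr // mul1r; move: HK0; lra.
have Ck : 0 < C ^+ k.+1 := exprn_gt0 _ C_gt0.
have eps_s : 0 < s / C ^+ k.+1 <= s.
  rewrite divr_gt0 ?s_gt0 //= ler_pdivrMr //.
  by rewrite ler_peMr ?(ltW s_gt0) ?exprn_ege1.
have [a' [b' [ha'b' ha' hd']]] := steep_step hab eps_s hd.
have CE : C * (s / C ^+ k.+1) = s / C ^+ k.
  by rewrite exprS; field; rewrite !lt0r_neq0 ?exprn_gt0 ?C_gt0.
rewrite CE in hd'; have [a'' ha''] := IH _ _ ha'b' hd'.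
by exists a''; rewrite -natr1 mulrDl mul1r; move: ha' ha''; lra.
Qed.
Arguments climb k [a b].

Lemma oscillation_unbounded :
  (forall eps, 0 < eps -> exists a b, adj a b /\ 1 - eps <= F a - F b) ->
  forall r, exists a a', r <= F a' - F a.
Proof.
move=> Hsteep r.
have [n hn] : exists n : nat, r / s <= n%:R.
  exists (Num.Def.archi_bound `|r / s|).
  exact: le_trans (ler_norm _) (ltW (archi_boundP (normr_ge0 _))).
have [a [b [hab hd]]] := Hsteep _ (divr_gt0 s_gt0 (exprn_gt0 n C_gt0)).
have [a' ha'] := climb n hab hd.
by exists a, a'; move: hn ha'; rewrite ler_pdivrMr ?s_gt0 //; lra.
Qed.

End Harmonic.

End Graph.

Theorem theorem2p1 (R : realType) (V : countType) (w : V -> V -> R) (m : V -> R) :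
  is_mwgraph w m ->
  connected_graph w ->
  locally_finite w ->
  (Deg_max w m < +oo)%E ->
  (0 < q_min w m)%E ->
  (forall x y : V, x <> y -> (0 <= kappa w m x y)%E) ->
  forall f : V -> R,
    (exists M : R, forall x, `|f x| <= M) ->
    (forall x, Lap w m f x = 0) ->
    forall x y, f x = f y.
Proof.
move=> Hg Hconn Hlf /Deg_max_ub[K K0 HK] /q_min_lb[Q Q0 HQ] Hk f [M HM] Hh x y.
case: (eqVneq (f x) (f y)) => // Hne; exfalso.
have [a [b [hab hba]]] := connected_nonconst_edge Hg Hconn Hne.
have [L L0 [HF Hsteep]] := normalize_gradient HM hab hba.
have HhF z : Lap w m (fun z => L^-1 * f z) z = 0.
  by rewrite (Lap_scale Hg Hlf) Hh mulr0.
have [a' [a'' Hosc]] := oscillation_unbounded Hg Hlf Hk Q0 K0 HQ HK HF HhF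
  Hsteep (2 * (L^-1 * M) + 1).
have HB z : `|L^-1 * f z| <= L^-1 * M.
  by rewrite normrM gtr0_norm ?invr_gt0 // ler_wpM2l // invr_ge0 ltW.
move: Hosc (HB a') (HB a''); rewrite !ler_norml.
by move=> ? /andP[? ?] /andP[? ?]; lra.
Qed.
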